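(* Let $G$ be a metabelian group, i.e. $[[x,y],z]=1$ for all $x,y,z\in G$, where $[a,b]=a^{-1}b^{-1}ab$. Then for every real Banach space $E$, Jensen's functional equation $f(xy)+f(xy^{-1})=2f(x)$ is stable for the pair $(G;E)$: for every function $f\colon G\to E$ for which there is $c>0$ with $\|f(xy)+f(xy^{-1})-2f(x)\|\le c$ for all $x,y\in G$, there exists a function $j\colon G\to E$ satisfying $j(xy)+j(xy^{-1})=2j(x)$ for all $x,y\in G$ such that $j-f$ is bounded on $G$.
   Context: Groups are written multiplicatively with identity $1$. *)

From HB Require Import structures.
From mathcomp Require Import all_boot all_order all_algebra.
From mathcomp Require Import all_classical all_reals all_analysis.
Set Implicit Arguments.
Unset Strict Implicit.
Unset Printing Implicit Defensive.
Import Order.TTheory GRing.Theory Num.Theory.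

(* Metabelian in the sense of the paper: [[x,y],z] = 1 for all x y z,
   with [a,b] = a^-1 b^-1 a b (this is MathComp's commg, notation [~ a, b]). *)
Definition metabelian (G : groupType) : Prop :=
  forall x y z : G, [~ [~ x, y], z]%g = 1%g.

(* Hyers' direct method.  Jensen's inequality at (u, u) gives
   f(u^2) = 2 f(u) up to c + |f 1|, so j(x) := lim 2^-n f(x^(2^n)) exists
   (the increments decay geometrically) and stays within c + |f 1| of f.
   For j to satisfy Jensen's equation one needs a common w with
   (xy)^(2^n) = x^(2^n) w and (xy^-1)^(2^n) = x^(2^n) w^-1; in a metabelian
   group this relation survives squaring because commutators are central.
   The Jensen defect of 2^-n f(_^(2^n)) at (x, y) is then 2^-n times a defect
   of f, which tends to 0. *)

From HB Require Import structures.
From mathcomp Require Import all_boot all_order all_algebra.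
From mathcomp Require Import all_classical all_reals all_analysis.
From mathcomp Require Import lra.
Import Order.TTheory GRing.Theory Num.Theory.
Import numFieldNormedType.Exports.
Local Open Scope classical_set_scope.
Local Open Scope ring_scope.

Section Midpoint.
Context {G : groupType}.
Local Open Scope group_scope.

(* Additively: u + v = 2 a, i.e. u = a w and v = a w^-1 (see [midpointP]). *)
Definition midpoint (a u v : G) : Prop := v * a^-1 * u = a.

Lemma midpoint_mulV (a w : G) : midpoint a (a * w) (a * w^-1).
Proof. by rewrite /midpoint !mulgA !mulgVK. Qed.

Lemma midpointP (a u v : G) :
  midpoint a u v -> exists w, u = a * w /\ v = a * w^-1.
Proof.
move=> mid; exists (a^-1 * u); split; first by rewrite mulVKg.
by rewrite invgM invgK mulgA -{1}mid mulgK mulgVK.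
Qed.

Hypothesis hG : metabelian G.

Lemma commg_central (x y z : G) : [~ x, y] * z = z * [~ x, y].
Proof. by apply/commgP/eqP; apply: hG. Qed.

Lemma midpoint_sqr (a u v : G) :
  midpoint a u v -> midpoint (a ^+ 2) (u ^+ 2) (v ^+ 2).
Proof.
case/midpointP=> w [-> ->]; rewrite /midpoint !expg2.
have -> : a * w^-1 * (a * w^-1) * (a * a)^-1 * (a * w * (a * w))
          = a * w^-1 * a * [~ w, a] * w.
  by rewrite invgM /commg /conjg !mulgA mulgVK.
have -> : a * w^-1 * a = a * a * [~ a, w] * w^-1.
  by rewrite /commg /conjg !mulgA mulgK mulgK.
(* the central commutator [~ w, a] moves past w and cancels [~ a, w] *)
by rewrite -mulgA commg_central mulgA mulgVK -mulgA -(invgR a w) mulgV mulg1.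
Qed.

Lemma midpoint_expn2 (a u v : G) n :
  midpoint a u v -> midpoint (a ^+ (2 ^ n)) (u ^+ (2 ^ n)) (v ^+ (2 ^ n)).
Proof.
elim: n => [|n IHn] mid; first by rewrite !expg1.
by rewrite expnSr !expgnA; apply/midpoint_sqr/IHn.
Qed.
End Midpoint.

Section GeometricIncrements.
Context {R : realType} {E : completeNormedModType R} (u : nat -> E) (d q : R).
Hypothesis u_increment : forall n, `|u n.+1 - u n| <= d * q ^+ n.
Hypotheses (q_gt0 : 0 < q) (q_lt1 : q < 1).

Let q_norm_lt1 : `|q| < 1. Proof. by rewrite ger0_norm // ltW. Qed.

Let d_ge0 : 0 <= d.
Proof. by have := u_increment 0; rewrite expr0 mulr1; apply: le_trans. Qed.

Lemma geometric_increments_cvgn : cvgn u.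
Proof.
rewrite (funext (eq_sum_telescope u)); apply: is_cvgD; first exact: is_cvg_cst.
apply/normed_cvg/(series_le_cvg _ _ u_increment) => [n|n|].
- exact: normr_ge0.
- by rewrite mulr_ge0 // exprn_ge0 // ltW.
- exact: (@is_cvg_geometric_series _ d q q_norm_lt1).
Qed.

Lemma geometric_increments_dist n : `|u n - u 0| <= d / (1 - q).
Proof.
rewrite (eq_sum_telescope u n) addrC addKr.
apply: le_trans (ler_norm_sum _ _ _) _.
apply: le_trans (geometric_le_lim n d_ge0 q_gt0 q_norm_lt1).
by apply: ler_sum => k _; apply: u_increment.
Qed.

Lemma geometric_increments_lim_dist : `|limn u - u 0| <= d / (1 - q).
Proof.
apply: (cvgr_to_le (cvg_norm (cvgB geometric_increments_cvgn (cvg_cst (u 0))))).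
exact/nearW/geometric_increments_dist.
Qed.

End GeometricIncrements.

Section HyersSequence.
Context {G : groupType} {R : realType} {E : completeNormedModType R}.
Variables (f : G -> E) (c : R).
Hypothesis f_jensen_defect : forall x y : G,
  `| f (x * y)%g + f (x * y^-1)%g - 2 *: f x | <= c.

Definition hyers_seq (x : G) (n : nat) : E := 2 ^- n *: f (x ^+ (2 ^ n))%g.

Definition hyers_lim (x : G) : E := limn (hyers_seq x).

Lemma sqr_defect (u : G) : `| f (u ^+ 2)%g - 2 *: f u | <= c + `|f 1%g|.
Proof.
have := f_jensen_defect u u; rewrite mulgV -expg2 => defect_uu.
have -> : f (u ^+ 2)%g - 2 *: f u
          = (f (u ^+ 2)%g + f 1%g - 2 *: f u) - f 1%g by rewrite addrAC addrK.
by apply: le_trans (ler_normB _ _) _; apply: lerD.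
Qed.

Lemma hyers_seq_increment x n :
  `|hyers_seq x n.+1 - hyers_seq x n| <= (c + `|f 1%g|) / 2 * 2^-1 ^+ n.
Proof.
set u := (x ^+ (2 ^ n))%g.
have -> : hyers_seq x n.+1 - hyers_seq x n
          = 2 ^- n.+1 *: (f (u ^+ 2)%g - 2 *: f u).
  rewrite /hyers_seq expnSr expgnA -/u scalerBr scalerA exprSr invfM.
  by rewrite -mulrA mulVf ?pnatr_eq0 // mulr1.
rewrite normrZ ger0_norm ?invr_ge0 ?exprn_ge0 // mulrC -exprVn exprSr.
rewrite mulrAC mulrA ler_wpM2r ?exprn_ge0 ?invr_ge0 //.
by rewrite ler_wpM2r ?invr_ge0 // sqr_defect.
Qed.

Lemma hyers_seq_cvgn x : cvgn (hyers_seq x).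
Proof. by apply: (geometric_increments_cvgn _ _ _ (hyers_seq_increment x)); lra. Qed.

Lemma hyers_lim_dist x : `|hyers_lim x - f x| <= c + `|f 1%g|.
Proof.
have := geometric_increments_lim_dist _ _ _ (hyers_seq_increment x).
rewrite /hyers_lim {2}/hyers_seq expr0 invr1 scale1r expg1.
have -> : 1 - 2^-1 = 2^-1 :> R by lra.
rewrite invrK mulfVK ?pnatr_eq0 //.
by apply; lra.
Qed.

Lemma hyers_lim_jensen (hG : metabelian G) (x y : G) :
  hyers_lim (x * y)%g + hyers_lim (x * y^-1)%g = 2 *: hyers_lim x.
Proof.
pose b n := hyers_seq (x * y)%g n + hyers_seq (x * y^-1)%g n
            - 2 *: hyers_seq x n.
have b_cvg : b @ \oo --> hyers_lim (x * y)%g + hyers_lim (x * y^-1)%g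
                         - 2 *: hyers_lim x.
  apply: cvgB; [apply: cvgD | apply: cvgZ; first exact: cvg_cst];
    exact: hyers_seq_cvgn.
have b_le n : `|b n| <= c * 2^-1 ^+ n.
  rewrite /b /hyers_seq.
  have /midpointP[w [-> ->]] :
      midpoint (x ^+ (2 ^ n)) ((x * y) ^+ (2 ^ n)) ((x * y^-1) ^+ (2 ^ n)).
    exact/midpoint_expn2/midpoint_mulV.
  rewrite scalerA mulrC -scalerA -scalerDr -scalerBr normrZ.
  rewrite ger0_norm ?invr_ge0 ?exprn_ge0 // mulrC -exprVn.
  by rewrite ler_wpM2r ?exprn_ge0 ?invr_ge0.
have b_cvg0 : b @ \oo --> 0.
  apply: norm_cvg0; apply: (@squeeze_cvgr _ _ _ _ (fun=> 0) (geometric c 2^-1)).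
  - by apply: nearW => n; rewrite normr_ge0 b_le.
  - exact: cvg_cst.
  - by apply: cvg_geometric; rewrite ger0_norm ?invr_ge0 // invf_lt1 ?ltr1n.
by apply/subr0_eq/(cvg_unique _ b_cvg b_cvg0).
Qed.

End HyersSequence.

Theorem theorem3p11 (G : groupType) (hG : metabelian G)
  (R : realType) (E : completeNormedModType R) (f : G -> E) :
  (exists c : R, 0 < c /\
     forall x y : G, `| f (x * y)%g + f (x * y^-1)%g - 2 *: f x | <= c) ->
  exists j : G -> E,
    (forall x y : G, j (x * y)%g + j (x * y^-1)%g = 2 *: j x) /\
    (exists M : R, forall x : G, `| j x - f x | <= M).
Proof.
move=> [c [_ f_jensen_defect]].
exists (hyers_lim f); split; first exact: hyers_lim_jensen.
by exists (c + `|f 1%g|); apply: hyers_lim_dist.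
Qed.
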